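(* Let $a_1,\dots,a_l\in\mathbb{R}^n$, $b_1,\dots,b_l\in\mathbb{R}$ with $1\le m\le l$, let $D=\{x\in\mathbb{R}^n : \langle a_j,x\rangle\le b_j,\ j=m+1,\dots,l\}$ and $f(x)=\max_{i=1,\dots,m}[\langle a_i,x\rangle-b_i]+\delta_D(x)$, where none of the affine functions and none of the inequalities can be omitted in this representation. Let $x\in\operatorname{dom} f$ and $u\in\partial f(x)$. Then $$\operatorname{ind} f(x|u)=\{w\in\mathbb{R}^n : \exists\bar t>0\ \forall t\in(0,\bar t):\ u\in\partial f(x+tw)\}.$$
   Context: $\delta_D$ is the indicator function of $D$. For $f(x)\in\mathbb{R}$, $u\in\mathbb{R}^n$, $t>0$, $\xi\in\mathbb{R}^n$, the second-order difference quotient is $\Delta_t^2f(x|u)(\xi)=\frac{2}{t}\left[\frac{f(x+t\xi)-f(x)}{t}-\langle u,\xi\rangle\right]$, the second subderivative is $d^2f(x|u)(\xi)=\liminf_{t\searrow 0,\ \xi'\to\xi}\Delta_t^2f(x|u)(\xi')$, and the indicatrix of $f$ at $x$ relative to $u$ is $\operatorname{ind} f(x|u)=\{\xi\in\mathbb{R}^n : d^2f(x|u)(\xi)\le 1\}$. *)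

From HB Require Import structures.
From mathcomp Require Import all_boot all_order all_algebra.
From mathcomp Require Import all_classical all_reals all_analysis.
Set Implicit Arguments. Unset Strict Implicit. Unset Printing Implicit Defensive.
Import Order.TTheory GRing.Theory Num.Theory.
Import numFieldNormedType.Exports.
Local Open Scope classical_set_scope.
Local Open Scope ring_scope.

Definition dotv (R : realType) (n : nat) (a x : 'rV[R]_n) : R := (a *m x^T) 0 0.

Definition indic (R : realType) (n : nat) (D : set 'rV[R]_n) (x : 'rV[R]_n) : \bar R :=
  if `[< D x >] then 0%E else +oo%E.

(* Polyhedral data: indices 'I_l; the affine pieces are the indices in [A],
   the inequality constraints are the indices in [C].
   polyf a b A C x = max_{i in A} (<a_i,x> - b_i) + delta_{ {y | <a_j,y> <= b_j, j in C} }(x)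
   (the max over the empty family is -oo). *)
Definition polyD (R : realType) (n l : nat) (a : 'I_l -> 'rV[R]_n) (b : 'I_l -> R)
  (C : set 'I_l) : set 'rV[R]_n :=
  [set x | forall j, C j -> dotv (a j) x <= b j].

Definition polyf (R : realType) (n l : nat) (a : 'I_l -> 'rV[R]_n) (b : 'I_l -> R)
  (A C : set 'I_l) (x : 'rV[R]_n) : \bar R :=
  (ereal_sup [set ((dotv (a i) x - b i)%:E) | i in A] + indic (polyD a b C) x)%E.

(* Affine indices: i < m (0-based, i.e. 1..m); constraint indices: m <= j < l. *)
Definition affI (l m : nat) : set 'I_l := [set i : 'I_l | (i < m)%N].
Definition conI (l m : nat) : set 'I_l := [set i : 'I_l | (m <= i)%N].
Arguments affI : clear implicits.
Arguments conI : clear implicits.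

(* "None of the affine functions and none of the inequalities can be omitted":
   omitting any one of them changes the function f. *)
Definition irredundant (R : realType) (n l m : nat) (a : 'I_l -> 'rV[R]_n) (b : 'I_l -> R) :=
  (forall i, affI l m i ->
     polyf a b ((affI l m) `\ i) (conI l m) <> polyf a b (affI l m) (conI l m)) /\
  (forall j, conI l m j ->
     polyf a b (affI l m) ((conI l m) `\ j) <> polyf a b (affI l m) (conI l m)).

Definition edom (R : realType) (n : nat) (f : 'rV[R]_n -> \bar R) : set 'rV[R]_n :=
  [set x | f x < +oo]%E.

Definition subdiff (R : realType) (n : nat) (f : 'rV[R]_n -> \bar R) (x : 'rV[R]_n)
  : set 'rV[R]_n :=
  [set u | f x \is a fin_num /\ forall y, (f x + (dotv u (y - x)%R)%:E <= f y)%E].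

Definition diffq2 (R : realType) (n : nat) (f : 'rV[R]_n -> \bar R) (x u : 'rV[R]_n)
  (t : R) (xi : 'rV[R]_n) : \bar R :=
  ((2 / t)%:E * ((f (x + t *: xi)%R - f x) * (t^-1)%:E - (dotv u xi)%:E))%E.

Definition subderiv2 (R : realType) (n : nat) (f : 'rV[R]_n -> \bar R) (x u xi : 'rV[R]_n)
  : \bar R :=
  limf_einf (fun p : R * 'rV[R]_n => diffq2 f x u p.1 p.2)
            (filter_prod (0^'+) (nbhs xi)).

Definition indicatrix (R : realType) (n : nat) (f : 'rV[R]_n -> \bar R) (x u : 'rV[R]_n)
  : set 'rV[R]_n :=
  [set xi | (subderiv2 f x u xi <= 1)%E].

From Pilot Require Import Defs.
From HB Require Import structures.
From mathcomp Require Import all_boot all_order all_algebra.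
From mathcomp Require Import all_classical all_reals all_analysis.
From mathcomp Require Import lra.
Set Implicit Arguments. Unset Strict Implicit. Unset Printing Implicit Defensive.
Import Order.TTheory GRing.Theory Num.Theory.
Import numFieldNormedType.Exports.
Local Open Scope classical_set_scope.
Local Open Scope ring_scope.

(* Since u is a subgradient at x, the difference quotient of f along w vanishes
   as soon as f(x + t w) = f(x) + t <u, w>, i.e. as soon as u is still a
   subgradient at x + t w.  For polyhedral f nothing lies in between: if an active
   constraint has <a_j, w> > 0, f is +oo at x + t xi for all small t and xi near w;
   if an active piece has <a_i, w> > <u, w>, it pushes f(x + t xi) above
   f(x) + t <u, xi> + t^2, so the quotients are at least 2 near (0+, w); and if
   neither happens, only the active pieces and constraints matter for small t, so
   f(x + t w) = f(x) + t <u, w>.  Thus d^2 f(x|u)(w) is either <= 0 or >= 2. *)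

Section InnerProduct.
Variables (R : realType) (n : nat).

Lemma dotvD (c x y : 'rV[R]_n) : dotv c (x + y) = dotv c x + dotv c y.
Proof. by rewrite /dotv linearD mulmxDr mxE. Qed.

Lemma dotvZ (c y : 'rV[R]_n) t : dotv c (t *: y) = t * dotv c y.
Proof. by rewrite /dotv linearZ /= -scalemxAr mxE. Qed.

Lemma dotvB (c x y : 'rV[R]_n) : dotv c (x - y) = dotv c x - dotv c y.
Proof. by rewrite -scaleN1r dotvD dotvZ mulN1r. Qed.

Lemma continuous_dotv (c : 'rV[R]_n) : continuous (dotv c).
Proof.
have -> : dotv c = (fun y => \sum_(k < n) c 0 k * y 0 k).
  by apply/funext => y; rewrite /dotv !mxE; apply: eq_bigr => k _; rewrite mxE.
apply: continuous_big => [|k _ y]; first exact: add_continuous.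
by apply: continuousM; [exact: cst_continuous | exact: coord_continuous].
Qed.

End InnerProduct.

Section RightOfZero.
Variable R : realType.

Lemma near_right0_mulr_lt (c e : R) : 0 < e -> \forall t \near 0^'+, t * c < e.
Proof.
move=> e0; apply: (@cvgr_lt _ _ _ _ (fun t => t * c) 0) => //.
have : (fun t => t * c) @ 0^'+ --> 0 * c.
  by apply: cvgMr_tmp; apply: cvg_at_right_filter; exact: cvg_id.
by rewrite mul0r.
Qed.

Lemma near_right0_itv (P : R -> Prop) :
  (\forall t \near 0^'+, P t) -> exists2 e : R, 0 < e & forall t, 0 < t < e -> P t.
Proof.
rewrite near_withinE => /nbhs_ballP [e e0 He]; exists e => // t /andP [t0 te].
by apply: He => //; rewrite /ball /= sub0r normrN gtr0_norm.
Qed.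

End RightOfZero.

Lemma limf_einf_ge (R : realType) (T : choiceType) (X : filteredType T)
    (F : set_system X) (f : X -> \bar R) (c : \bar R) :
  F [set p | (c <= f p)%E] -> (c <= limf_einf f F)%E.
Proof.
move=> Fc; rewrite limf_einfE; apply: le_ereal_sup_tmp.
exists (ereal_inf (f @` [set p | (c <= f p)%E])); first by exists [set p | (c <= f p)%E].
by apply: le_ereal_inf_tmp => _ [p cp <-].
Qed.

Lemma limf_einf_prod_le (R : realType) (T U : topologicalType)
    (G : set_system T) (f : T * U -> \bar R) (w : U) (c : \bar R) :
  ProperFilter G -> (\forall t \near G, (f (t, w) <= c)%E) ->
  (limf_einf f (filter_prod G (nbhs w)) <= c)%E.
Proof.
move=> PG Gc; rewrite limf_einfE; apply: ge_ereal_sup => _ [V [[A B] /= [GA Bw] ABV] <-].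
have [t [At ftc]] := filter_ex (filterI GA Gc).
apply: le_trans ftc; apply: ereal_inf_lbound; exists (t, w) => //.
by apply: ABV; split => //; exact: nbhs_singleton.
Qed.

Section AlongSubgradient.
Variables (R : realType) (n : nat) (F : 'rV[R]_n -> \bar R) (x u : 'rV[R]_n) (Fx : R).
Hypotheses (hFx : F x = Fx%:E) (hsub : forall y, (F x + (dotv u (y - x))%:E <= F y)%E).

Lemma subdiff_alongP t w :
  subdiff F (x + t *: w) u <-> F (x + t *: w) = (Fx + t * dotv u w)%:E.
Proof.
split => [[+ hsubt]|Fxtw].
  have := hsubt x; have := hsub (x + t *: w).
  case: (F (x + t *: w)) => // r.
  rewrite hFx -!EFinD !lee_fin !dotvB dotvD dotvZ => h1 h2 _.
  by congr (_%:E); lra.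
split => [|y]; first by rewrite Fxtw.
apply: le_trans (hsub y); rewrite Fxtw hFx -EFinD lee_fin !dotvB dotvD dotvZ; lra.
Qed.

Lemma diffq2_along t w : t != 0 ->
  F (x + t *: w) = (Fx + t * dotv u w)%:E -> diffq2 F x u t w = 0%E.
Proof.
move=> t0 Fxtw; rewrite /diffq2 Fxtw hFx; congr (_%:E).
by rewrite addrAC subrr add0r (mulrC t) mulfK // subrr mulr0.
Qed.

Lemma diffq2_ge2 t xi : 0 < t ->
  ((Fx + t * (dotv u xi + t))%:E <= F (x + t *: xi))%E ->
  (2%:E <= diffq2 F x u t xi)%E.
Proof.
move=> t0; rewrite /diffq2 hFx; case: (F (x + t *: xi)) => // [r|_]; last first.
  rewrite addye // gt0_mulye ?lte_fin ?invr_gt0 //.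
  by rewrite addye // gt0_muley ?leey // lte_fin divr_gt0.
rewrite lee_fin => hr; rewrite lee_fin.
have tt1 : t * t^-1 = 1 by rewrite mulfV // gt_eqF.
have hq : t <= (r - Fx) * t^-1 - dotv u xi.
  by rewrite lerBrDr ler_pdivlMr //; lra.
have : 0 < t^-1 by rewrite invr_gt0.
nra.
Qed.

End AlongSubgradient.

Section Polyhedral.
Variables (R : realType) (n l : nat) (a : 'I_l -> 'rV[R]_n) (b : 'I_l -> R).

Local Notation piece i y := (dotv (a i) y - b i).

Lemma near_piece_lt_along x w i0 :
  \forall t \near 0^'+, forall j, piece j x < piece i0 x ->
    piece j (x + t *: w) < piece i0 (x + t *: w).
Proof.
apply: filter_forall => j.
have [lt|nlt] := pselect (piece j x < piece i0 x); last by apply: nearW => t /nlt.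
have e0 : 0 < piece i0 x - piece j x by rewrite subr_gt0.
apply: filterS (near_right0_mulr_lt (dotv (a j) w - dotv (a i0) w) e0) => t ht _.
by rewrite !dotvD !dotvZ; lra.
Qed.

Variable C : set 'I_l.

Lemma near_polyD_along x w : polyD a b C x ->
  (forall j, C j -> dotv (a j) x = b j -> dotv (a j) w <= 0) ->
  \forall t \near 0^'+, polyD a b C (x + t *: w).
Proof.
move=> Dx active; apply: filter_forall => j.
have [Cj|nCj] := pselect (C j); last by apply: nearW => t /nCj.
have := Dx j Cj; rewrite le_eqVlt => /predU1P [axj|axj].
  apply: filterS (nbhs_right_gt 0) => t t0 _; rewrite dotvD dotvZ axj.
  by have := active j Cj axj; nra.
have e0 : 0 < b j - dotv (a j) x by rewrite subr_gt0.
apply: filterS (near_right0_mulr_lt (dotv (a j) w) e0) => t ht _.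
by rewrite dotvD dotvZ; lra.
Qed.

Variable A : set 'I_l.
Hypothesis A0 : A !=set0.

Local Notation F := (polyf a b A C).

Lemma polyf_ge_piece i y : A i -> ((piece i y)%:E <= F y)%E.
Proof.
move=> Ai; apply: lee_paddr; first by rewrite /Defs.indic; case: ifP.
by apply: ereal_sup_ubound; exists i.
Qed.

Lemma polyf_notin_polyD y : ~ polyD a b C y -> F y = +oo%E.
Proof.
move=> Dy; have [i Ai] := A0.
rewrite /polyf /Defs.indic asboolF // addey // -ltNye.
apply: lt_le_trans (ltNyr (piece i y)) _.
by apply: ereal_sup_ubound; exists i.
Qed.

Lemma polyf_attained y : polyD a b C y -> exists2 i, A i & F y = (piece i y)%:E.
Proof.
move=> Dy; have [i0 Ai0] := A0.
have /asboolP Pi0 : A i0 by [].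
case: (@arg_maxP _ _ _ i0 (fun i => `[< A i >]) (fun i => piece i y) Pi0).
move=> i /asboolP Ai imax; exists i => //; apply/eqP; rewrite eq_le polyf_ge_piece // andbT.
rewrite /polyf /Defs.indic asboolT // adde0; apply: ge_ereal_sup => _ [j Aj <-].
by rewrite lee_fin; apply/imax/asboolP.
Qed.

Section AtPoint.
Variables (x u : 'rV[R]_n) (Fx : R).
Hypotheses (hFx : F x = Fx%:E) (hsub : forall y, (F x + (dotv u (y - x))%:E <= F y)%E).

Lemma near_polyf_along w :
  (forall j, C j -> dotv (a j) x = b j -> dotv (a j) w <= 0) ->
  (forall i, A i -> piece i x = Fx -> dotv (a i) w <= dotv u w) ->
  \forall t \near 0^'+, F (x + t *: w) = (Fx + t * dotv u w)%:E.
Proof.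
move=> active_con active_piece.
have Dx : polyD a b C x by apply: contrapT => /polyf_notin_polyD; rewrite hFx.
have [i0 Ai0] := polyf_attained Dx; rewrite hFx => -[Fx_i0].
near=> t.
have [i Ai Fi] : exists2 i, A i & F (x + t *: w) = (piece i (x + t *: w))%:E.
  by apply: polyf_attained; near: t; exact: near_polyD_along.
(* the maximal piece at x + t w is active at x: inactive pieces stay below i0 *)
have ix : piece i x = Fx.
  have : ((piece i x)%:E <= F x)%E by exact: polyf_ge_piece.
  have := polyf_ge_piece (x + t *: w) Ai0; rewrite Fi hFx !lee_fin => i0_le_i i_le.
  case: (ltP (piece i x) Fx) => [lt|]; last by lra.
  rewrite Fx_i0 in lt.
  have : piece i (x + t *: w) < piece i0 (x + t *: w).
    by move: i lt {Ai Fi i0_le_i i_le}; near: t; exact: near_piece_lt_along.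
  lra.
have t0 : 0 < t by near: t; exact: nbhs_right_gt.
have := active_piece i Ai ix; have := hsub (x + t *: w).
rewrite Fi hFx -EFinD lee_fin !dotvB !dotvD !dotvZ => h1 h2.
by congr (_%:E); nra.
Unshelve. all: by end_near. Qed.

Lemma subderiv2_ge2_active_constraint j w :
  C j -> dotv (a j) x = b j -> 0 < dotv (a j) w -> (2%:E <= subderiv2 F x u w)%E.
Proof.
move=> Cj axj ajw; apply: limf_einf_ge.
exists ([set t : R | 0 < t], [set xi | 0 < dotv (a j) xi]) => /=.
  split; first exact: nbhs_right_gt.
  exact: (cvgr_gt _ (@continuous_dotv _ _ (a j) w) 0 ajw).
case=> t xi /= [t0 xi0]; apply: (diffq2_ge2 hFx) => //.
rewrite polyf_notin_polyD ?leey // => D.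
by have := D j Cj; rewrite dotvD dotvZ axj; nra.
Qed.

Lemma subderiv2_ge2_active_piece i w :
  A i -> piece i x = Fx -> dotv u w < dotv (a i) w -> (2%:E <= subderiv2 F x u w)%E.
Proof.
move=> Ai aix uw; set k := dotv (a i) w - dotv u w.
have ek : k = dotv (a i) w - dotv u w by [].
have k0 : 0 < k by rewrite subr_gt0.
apply: limf_einf_ge.
exists ([set t : R | 0 < t <= k / 2],
        [set xi | dotv (a i) w - k / 4 < dotv (a i) xi /\ dotv u xi < dotv u w + k / 4]) => /=.
  split.
    have k2 : 0 < k / 2 by rewrite divr_gt0.
    by apply: filterS (filterI (nbhs_right_gt 0) (nbhs_right_le k2)) => t [t0 tk]; apply/andP.
  apply: filterI.
    by apply: cvgr_gt (@continuous_dotv _ _ _ w) _ _; lra.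
  by apply: cvgr_lt (@continuous_dotv _ _ _ w) _ _; lra.
case=> t xi /= [/andP [t0 tk] [h1 h2]]; apply: (diffq2_ge2 hFx) => //.
apply: le_trans (polyf_ge_piece _ Ai); rewrite lee_fin !dotvD !dotvZ.
have : t <= dotv (a i) xi - dotv u xi by lra.
nra.
Qed.

Lemma near_polyf_along_of_subderiv2_lt2 w : (subderiv2 F x u w < 2%:E)%E ->
  \forall t \near 0^'+, F (x + t *: w) = (Fx + t * dotv u w)%:E.
Proof.
move=> lt2; apply: near_polyf_along => [j Cj axj|i Ai aix]; rewrite leNgt; apply/negP.
  by move=> /(subderiv2_ge2_active_constraint Cj axj); rewrite leNgt lt2.
by move=> /(subderiv2_ge2_active_piece Ai aix); rewrite leNgt lt2.
Qed.

End AtPoint.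
End Polyhedral.

Theorem corollary4p8 (R : realType) (n l m : nat)
  (a : 'I_l -> 'rV[R]_n) (b : 'I_l -> R)
  (hm1 : (1 <= m)%N) (hml : (m <= l)%N)
  (hirr : irredundant m a b)
  (x u : 'rV[R]_n)
  (hx : x \in edom (polyf a b (affI l m) (conI l m)))
  (hu : u \in subdiff (polyf a b (affI l m) (conI l m)) x) :
  indicatrix (polyf a b (affI l m) (conI l m)) x u =
  [set w | exists2 tbar : R, 0 < tbar &
     forall t : R, 0 < t < tbar ->
       subdiff (polyf a b (affI l m) (conI l m)) (x + t *: w) u].
Proof.
set F := polyf a b (affI l m) (conI l m).
have A0 : affI l m !=set0 by exists (Ordinal (leq_trans hm1 hml)).
move: hu; rewrite in_setE => -[Fx_fin hsub].
have hFx : F x = (fine (F x))%:E by rewrite fineK.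
apply/seteqP; split => w /= hw.
  have lt2 : (subderiv2 F x u w < 2%:E)%E by apply: le_lt_trans hw _; rewrite lte_fin ltr1n.
  have [e e0 He] := near_right0_itv (near_polyf_along_of_subderiv2_lt2 A0 hFx hsub lt2).
  by exists e => // t /He Fxtw; apply/(subdiff_alongP hFx hsub).
case: hw => tb tb0 along; rewrite /indicatrix /subderiv2 /=.
apply: le_trans (_ : 0 <= 1)%E; last by rewrite lee_fin.
apply: limf_einf_prod_le.
apply: filterS (filterI (nbhs_right_gt 0) (nbhs_right_lt tb0)) => t /= [t0 ttb].
rewrite (diffq2_along hFx) ?gt_eqF //.
by apply/(subdiff_alongP hFx hsub)/along; rewrite t0 ttb.
Qed.
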